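(* Let $\bm{A}=[\bm{A}_1\ \bm{A}_2]$ have full column rank with $\bm{A}_j^\top\bm{A}_j=\bm{I}_j$, $\bm{C}:=\bm{A}_2^\top\bm{A}_1\ne0$, $r:=\operatorname{rank}(\bm{C})$. Then $\min_{\gamma_1>0}\rho(\bm{M}(\gamma_1,1))=\dfrac{\lambda_1(\bm{C}\bm{C}^\top)}{2-\lambda_1(\bm{C}\bm{C}^\top)}$ if $r<n_1$, attained at $\gamma_1=\frac{2}{2-\lambda_1(\bm{C}\bm{C}^\top)}$; and $\min_{\gamma_1>0}\rho(\bm{M}(\gamma_1,1))=\dfrac{\lambda_1(\bm{C}\bm{C}^\top)-\lambda_r(\bm{C}\bm{C}^\top)}{2-\lambda_1(\bm{C}\bm{C}^\top)-\lambda_r(\bm{C}\bm{C}^\top)}$ if $r=n_1$, attained (when $r=n_1>1$) at $\gamma_1=\frac{2}{2-\lambda_1(\bm{C}\bm{C}^\top)-\lambda_r(\bm{C}\bm{C}^\top)}$.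
   Context: $\rho$: spectral radius; $\lambda_i$: $i$-th largest eigenvalue. $\bm{M}(\gamma_1,\gamma_2)=\begin{bmatrix}(1-\gamma_1)\bm{I}_1&-\gamma_1\bm{C}^\top\\-\gamma_2(1-\gamma_1)\bm{C}&(1-\gamma_2)\bm{I}_2+\gamma_1\gamma_2\bm{C}\bm{C}^\top\end{bmatrix}$, the two-block gradient descent iteration matrix with stepsizes $\gamma_1,\gamma_2$ for $\frac12\|\bm{A}\bm{x}-\bm{y}\|^2$ under $\bm{A}_j^\top\bm{A}_j=\bm{I}_j$. *)

From HB Require Import structures.
From mathcomp Require Import all_boot all_order all_algebra.
From mathcomp Require Import complex.
Set Implicit Arguments. Unset Strict Implicit. Unset Printing Implicit Defensive.
Import Order.TTheory GRing.Theory Num.Theory.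
Local Open Scope ring_scope.

Section Defs.
Variable R : rcfType.

(* The eigenvalues (complex, listed with algebraic multiplicity) of a real
   square matrix: the roots of the characteristic polynomial of M viewed
   as a complex matrix. *)
Definition mxspec n (M : 'M[R]_n) : seq R[i] :=
  sval (closed_field_poly_normal (char_poly (map_mx (real_complex R) M))).

Definition specrad n (M : 'M[R]_n) : R :=
  \big[Num.max/0]_(z <- mxspec M) Normc.normc z.

(* lambda_i(S) (i >= 1): the i-th largest eigenvalue (with multiplicity) of a
   matrix S with real spectrum (used for symmetric S = C C^T). *)
Definition eig_desc n (S : 'M[R]_n) (i : nat) : R :=
  nth 0 (sort (fun x y : R => y <= x) (map (@complex.Re R) (mxspec S))) i.-1.

Definition gdM n1 n2 (C : 'M[R]_(n2, n1)) (g1 g2 : R) : 'M[R]_(n1 + n2) :=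
  block_mx ((1 - g1)%:M) (- g1 *: C^T)
           (- (g2 * (1 - g1)) *: C) ((1 - g2)%:M + (g1 * g2) *: (C *m C^T)).

End Defs.

Arguments mxspec {R n} M.
Arguments specrad {R n} M.
Arguments eig_desc {R n} S i.
Arguments gdM {R n1 n2} C g1 g2.

From HB Require Import structures.
From mathcomp Require Import all_boot all_order all_algebra.
From mathcomp Require Import complex.
From mathcomp Require Import ring lra.
Set Implicit Arguments. Unset Strict Implicit. Unset Printing Implicit Defensive.
Import Order.TTheory GRing.Theory Num.Theory.
Local Open Scope ring_scope.
Local Open Scope complex_scope.

(* Writing M(g, 1) = [I; -C] [(1 - g) I, -g C^T], its nonzero eigenvalues are
   those of (1 - g) I + g C^T C, i.e. the numbers 1 - g + g mu for the
   eigenvalues mu of C^T C, so rho(M(g, 1)) = max_mu |1 - g + g mu|.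
   Orthonormality of the blocks and full column rank of A put every mu in
   [0, 1), with 0 among them iff rank C < n1, and the nonzero mu are the
   nonzero eigenvalues of C C^T.  Over mu in [lo, hi] with hi < 1, the best
   g > 0 balances 1 - g + g hi = -(1 - g + g lo): g = 2 / (2 - hi - lo), with
   rate (hi - lo) / (2 - hi - lo); here hi = lambda_1 and lo is 0 or lambda_r. *)

Local Notation cxmx := (map_mx (real_complex _)).

Lemma eigenvalue_mulmxC (F : fieldType) (p q : nat)
    (U : 'M[F]_(p, q)) (V : 'M[F]_(q, p)) x :
  x != 0 -> eigenvalue (U *m V) x = eigenvalue (V *m U) x.
Proof.
move=> x0; have swap a b (X : 'M[F]_(a, b)) (Y : 'M[F]_(b, a)) :
    eigenvalue (X *m Y) x -> eigenvalue (Y *m X) x.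
  move=> /eigenvalueP [v Hv v0]; apply/eigenvalueP; exists (v *m X).
    by rewrite mulmxA -(mulmxA v) Hv scalemxAl.
  apply: contra v0 => /eqP vX0; move: Hv.
  by rewrite mulmxA vX0 mul0mx => /esym/eqP; rewrite scaler_eq0 (negPf x0).
by apply/idP/idP; apply: swap.
Qed.

Lemma eigenvalue_affine (F : fieldType) n (S : 'M[F]_n) a g mu : g != 0 ->
  eigenvalue (a%:M + g *: S) (a + g * mu) = eigenvalue S mu.
Proof.
move=> g0; apply/eigenvalueP/eigenvalueP => -[v Hv v0]; exists v => //.
  move: Hv; rewrite mulmxDr mul_mx_scalar -scalemxAr scalerDl -scalerA.
  by move=> /addrI /(scalerI g0).
by rewrite mulmxDr mul_mx_scalar -scalemxAr Hv scalerDl scalerA.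
Qed.

Lemma sylvester_det (Rc : comNzRingType) (a b : nat)
    (A : 'M[Rc]_(a, b)) (B : 'M[Rc]_(b, a)) (x : Rc) :
  x ^+ b * \det (x%:M - A *m B) = x ^+ a * \det (x%:M - B *m A).
Proof.
pose M1 := block_mx (x%:M : 'M_a) A B (1%:M : 'M_b).
pose M2 := block_mx (1%:M : 'M_a) A B (x%:M : 'M_b).
have detM1 : \det M1 = \det (x%:M - A *m B).
  have -> : M1 = block_mx (x%:M - A *m B) A 0 1%:M *m block_mx 1%:M 0 B 1%:M.
    by rewrite /M1 mulmx_block ?mulmx1 ?mul1mx ?mulmx0 ?mul0mx ?addr0 ?add0r subrK.
  by rewrite det_mulmx det_ublock det_lblock !det1 !mulr1.
have detM2 : \det M2 = \det (x%:M - B *m A).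
  have -> : M2 = block_mx 1%:M 0 B (x%:M - B *m A) *m block_mx 1%:M A 0 1%:M.
    by rewrite /M2 mulmx_block ?mulmx1 ?mul1mx ?mulmx0 ?mul0mx ?addr0 ?add0r addrC subrK.
  by rewrite det_mulmx det_ublock det_lblock !det1 !mul1r mulr1.
have M12 : block_mx (1%:M : 'M_a) 0 0 (x%:M : 'M_b) *m M1
         = M2 *m block_mx (x%:M : 'M_a) 0 0 (1%:M : 'M_b).
  rewrite /M1 /M2 !mulmx_block !mulmx0 !mul0mx !mul1mx !mulmx1 !addr0 !add0r.
  by rewrite mul_scalar_mx mul_mx_scalar.
have := congr1 determinant M12.
rewrite !det_mulmx det_ublock det_lblock !det1 !det_scalar mul1r mulr1 detM1 detM2.
by move=> ->; rewrite mulrC.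
Qed.

Lemma char_poly_mulmxC (Rc : comNzRingType) (a b : nat)
    (A : 'M[Rc]_(a, b)) (B : 'M[Rc]_(b, a)) :
  'X ^+ b * char_poly (A *m B) = 'X ^+ a * char_poly (B *m A).
Proof.
by have := sylvester_det (map_mx polyC A) (map_mx polyC B) 'X; rewrite -!map_mxM.
Qed.

Lemma count_ge_prefix (T : Type) (x0 : T) (p : pred T) (s : seq T) k :
  (k <= size s)%N -> (forall i, (i < k)%N -> p (nth x0 s i)) -> (k <= count p s)%N.
Proof.
move=> ks prefix_p; rewrite -(cat_take_drop k s) count_cat.
apply: leq_trans (leq_addr _ _).
have : all p (take k s).
  apply/(all_nthP x0) => i; rewrite size_takel // => ik.
  by rewrite nth_take //; apply: prefix_p.
by rewrite all_count => /eqP ->; rewrite size_takel.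
Qed.

Lemma count_le_prefix (T : Type) (x0 : T) (p : pred T) (s : seq T) k :
  (forall i, (k <= i)%N -> (i < size s)%N -> ~~ p (nth x0 s i)) -> (count p s <= k)%N.
Proof.
move=> suffix_np; rewrite -(cat_take_drop k s) count_cat.
have -> : count p (drop k s) = 0%N.
  apply/eqP; rewrite -leqn0 leqNgt -has_count; apply/negP => has_p.
  have [j] := @has_nthP _ _ _ x0 has_p.
  rewrite size_drop nth_drop => ik; apply/negP; apply: suffix_np; first exact: leq_addr.
  by rewrite -ltn_subRL.
by rewrite addn0; apply: leq_trans (count_size _ _) _; rewrite size_take_min geq_minl.
Qed.

Section DescendingSort.
Variable R : realDomainType.
Implicit Type s : seq R.
Local Notation geR := (fun x y : R => y <= x).
Local Notation sortd s := (sort geR s).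

Lemma nth_sortd_le s i j :
  (i <= j)%N -> (j < size s)%N -> nth 0 (sortd s) j <= nth 0 (sortd s) i.
Proof.
move=> ij js; have sorted_s : sorted geR (sortd s).
  by apply: sort_sorted => x y; exact: le_total.
apply: (sorted_leq_nth (fun y x z h1 h2 => le_trans h2 h1) (fun x => lexx x) 0 sorted_s);
  by rewrite // inE size_sort // (leq_ltn_trans ij js).
Qed.

Lemma le_nth_sortd0 s x : x \in s -> x <= nth 0 (sortd s) 0.
Proof.
rewrite -(mem_sort geR) => xs; rewrite -(nth_index 0 xs).
by apply: nth_sortd_le => //; rewrite -(size_sort geR) index_mem.
Qed.

(* In a descending order the k positive entries come first, so entry k-1 is
   the least of them. *)
Lemma nth_sortd_count_gt0 s k : (0 < k)%N -> count (fun x => 0 < x) s = k ->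
  let y := nth 0 (sortd s) k.-1 in
  [/\ y \in s, 0 < y & forall x, x \in s -> 0 < x -> y <= x].
Proof.
move=> k0 cnt y.
rewrite -(count_sort geR) in cnt.
have ks : (k <= size s)%N by rewrite -cnt -(size_sort geR) count_size.
have y_gt0 : 0 < y.
  rewrite ltNge; apply/negP => y_le0.
  suff : (k <= k.-1)%N by rewrite leqNgt prednK ?leqnn.
  rewrite -[X in (X <= _)%N]cnt; apply: count_le_prefix => i ki isz.
  rewrite -leNgt; apply: (le_trans _ y_le0); apply: nth_sortd_le => //.
  by rewrite -(size_sort geR).
split=> //; first by rewrite -(mem_sort geR) mem_nth ?size_sort ?prednK.
move=> x; rewrite -(mem_sort geR) => xs x_gt0.
have js : (index x (sortd s) < size (sortd s))%N by rewrite index_mem.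
have xE := nth_index 0 xs; case: (leqP (index x (sortd s)) k.-1) => hj.
  by rewrite -xE; apply: nth_sortd_le => //; rewrite prednK.
have kj : (k <= index x (sortd s))%N by rewrite -(prednK k0).
suff : (k.+1 <= k)%N by rewrite ltnn.
rewrite -[X in (_ <= X)%N]cnt; apply: (count_ge_prefix (x0 := 0) (leq_ltn_trans kj js)) => i ik.
apply: (lt_le_trans x_gt0); rewrite -xE; apply: nth_sortd_le; first exact: leq_trans kj.
by rewrite -(size_sort geR).
Qed.

Lemma mem_nth_neq0 s i : nth 0 s i != 0 -> nth 0 s i \in s.
Proof.
move=> y0; rewrite mem_nth //; apply: contraR y0.
by rewrite -leqNgt => /(nth_default 0) ->.
Qed.

End DescendingSort.

Section RelaxationRate.
Variable R : realFieldType.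

Lemma relax_rate_lb (lo hi s g : R) : lo <= hi -> hi < 1 -> 0 < g ->
  `|1 - g + g * hi| <= s -> `|1 - g + g * lo| <= s ->
  (hi - lo) / (2 - hi - lo) <= s.
Proof.
move=> lohi hi1 g0; rewrite !ler_norml => /andP[_ hs] /andP[ls _].
rewrite ler_pdivrMr; last by lra.
nra.
Qed.

Lemma relax_rate_ub (lo hi mu : R) : lo <= mu -> mu <= hi -> hi < 1 ->
  let g := 2 / (2 - hi - lo) in
  `|1 - g + g * mu| <= (hi - lo) / (2 - hi - lo).
Proof.
move=> lomu muhi hi1 /=; set g := 2 / _; have D : 0 < 2 - hi - lo by lra.
have -> : 1 - g + g * mu = (2 * mu - hi - lo) / (2 - hi - lo).
  by rewrite /g; field; rewrite gt_eqF.
by rewrite normrM [X in _ * X]gtr0_norm ?invr_gt0 // ler_pM2r ?invr_gt0 // ler_norml; lra.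
Qed.

End RelaxationRate.

Section ComplexSpectrum.
Variable R : rcfType.

Lemma char_poly_mxspec n (M : 'M[R]_n) :
  char_poly (cxmx M) = \prod_(z <- mxspec M) ('X - z%:P).
Proof.
rewrite /mxspec; case: closed_field_poly_normal => s /= charE.
by rewrite {1}charE (monicP (char_poly_monic _)) scale1r.
Qed.

Lemma mem_mxspec n (M : 'M[R]_n) z : (z \in mxspec M) = eigenvalue (cxmx M) z.
Proof. by rewrite eigenvalue_root_char char_poly_mxspec root_prod_XsubC. Qed.

Lemma size_mxspec n (M : 'M[R]_n) : size (mxspec M) = n.
Proof.
have := size_char_poly (cxmx M).
by rewrite char_poly_mxspec size_prod_XsubC => -[].
Qed.

Lemma count_mxspec_mulmxC p q (A : 'M[R]_(p, q)) (B : 'M[R]_(q, p)) :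
  count (predC1 0) (mxspec (A *m B)) = count (predC1 0) (mxspec (B *m A)).
Proof.
have Xn k : 'X ^+ k = \prod_(z <- nseq k (0 : R[i])) ('X - z%:P).
  by rewrite big_nseq subr0; elim: k => //= k <-; rewrite exprS.
have := char_poly_mulmxC (cxmx A) (cxmx B).
rewrite -!map_mxM !char_poly_mxspec !Xn -!big_cat => /prod_XsubC_eq/seq.permP.
by move=> /(_ (predC1 0)); rewrite !count_cat !count_nseq /= eqxx !mul0n !add0n.
Qed.

Lemma normc_le_specrad n (M : 'M[R]_n) z :
  z \in mxspec M -> Normc.normc z <= specrad M.
Proof.
rewrite /specrad; elim: (mxspec M) => [|y s IH] //=.
rewrite in_cons big_cons le_max => /orP [/eqP ->|/IH ->]; by rewrite ?lexx ?orbT.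
Qed.

Lemma specrad_ge0 n (M : 'M[R]_n) : 0 <= specrad M.
Proof.
by rewrite /specrad; elim: (mxspec M) => [|y s IH]; rewrite ?big_nil // big_cons le_max IH orbT.
Qed.

Lemma specrad_le n (M : 'M[R]_n) b : 0 <= b ->
  (forall z, z \in mxspec M -> Normc.normc z <= b) -> specrad M <= b.
Proof.
rewrite /specrad => b0; elim: (mxspec M) => [|y s IH] bound; first by rewrite big_nil.
rewrite big_cons ge_max bound ?mem_head // IH // => z zs.
by apply: bound; rewrite in_cons zs orbT.
Qed.

Lemma real_complex_eq0 (x : R) : (x%:C == 0) = (x == 0).
Proof. by rewrite -(rmorph0 (real_complex R)) (inj_eq (@complexI R)). Qed.

Lemma normc_real (x : R) : Normc.normc x%:C = `|x|.
Proof. by rewrite /Normc.normc /= expr0n /= addr0 sqrtr_sqr. Qed.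

Definition sqnormc n (u : 'rV[R[i]]_n) : R[i] := (u *m (map_mx conjc u)^T) 0 0.

Lemma sqnormcE n (u : 'rV[R[i]]_n) : sqnormc u = \sum_j u 0 j * conjc (u 0 j).
Proof. by rewrite /sqnormc mxE; apply: eq_bigr => j _; rewrite !mxE. Qed.

Lemma sqnormc_ge0 n (u : 'rV[R[i]]_n) : 0 <= sqnormc u.
Proof. by rewrite sqnormcE sumr_ge0 // => j _; apply: mulcJ_ge0. Qed.

Lemma sqnormc_eq0 n (u : 'rV[R[i]]_n) : sqnormc u = 0 -> u = 0.
Proof.
rewrite sqnormcE => /eqP; rewrite psumr_eq0; last by move=> j _; apply: mulcJ_ge0.
move=> /allP u0; apply/matrixP => i j; rewrite ord1 !mxE.
by have /u0 /= := mem_index_enum j; rewrite mulf_eq0 conjc_eq0 orbb => /eqP.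
Qed.

Lemma map_conjc_mulmx_real n p (u : 'rV[R[i]]_n) (B : 'M[R]_(n, p)) :
  map_mx conjc (u *m cxmx B) = map_mx conjc u *m cxmx B.
Proof.
rewrite map_mxM; congr (_ *m _); rewrite -map_mx_comp.
by apply/matrixP => i j; rewrite !mxE /= oppr0.
Qed.

Lemma sqnormc_mulmx_real n p (u : 'rV[R[i]]_n) (B : 'M[R]_(n, p)) :
  sqnormc (u *m cxmx B) = (u *m cxmx (B *m B^T) *m (map_mx conjc u)^T) 0 0.
Proof.
by rewrite /sqnormc map_conjc_mulmx_real trmx_mul map_mxM -map_trmx !mulmxA.
Qed.

Lemma sqnormc_eig_gram n p (B : 'M[R]_(p, n)) (v : 'rV[R[i]]_n) z :
  v *m cxmx (B^T *m B) = z *: v -> z * sqnormc v = sqnormc (v *m cxmx B^T).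
Proof.
by move=> Hv; rewrite sqnormc_mulmx_real trmxK Hv -scalemxAl mxE.
Qed.

End ComplexSpectrum.

(* The Gram matrix of [A] is [[I, C^T]; [C, I]]; evaluating its quadratic form
   at [(v, -v C^T)] for an eigenvector [v] of [C^T C] with eigenvalue [z]
   gives [(1 - z) |v|^2], which full column rank makes positive. *)
Lemma eig_cross_gram (R : rcfType) m n1 n2 (A1 : 'M[R]_(m, n1)) (A2 : 'M[R]_(m, n2)) :
  \rank (row_mx A1 A2) = (n1 + n2)%N -> A1^T *m A1 = 1%:M -> A2^T *m A2 = 1%:M ->
  forall z, eigenvalue (cxmx ((A2^T *m A1)^T *m (A2^T *m A1))) z ->
  z = (complex.Re z)%:C /\ 0 <= complex.Re z < 1.
Proof.
move=> rkA A1o A2o z /eigenvalueP [v Hv v0]; set C := A2^T *m A1 in Hv.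
have v_gt0 : 0 < sqnormc v.
  by rewrite lt_def sqnormc_ge0 andbT; apply: contra v0 => /eqP/sqnormc_eq0 ->.
have z_ge0 : 0 <= z.
  have -> : z = sqnormc (v *m cxmx C^T) / sqnormc v by rewrite -(sqnormc_eig_gram Hv) mulfK ?gt_eqF.
  by rewrite divr_ge0 ?sqnormc_ge0.
pose w := row_mx v (- (v *m cxmx C^T)).
have gap : (1 - z) * sqnormc v = sqnormc (w *m cxmx (row_mx A1 A2)^T).
  rewrite sqnormc_mulmx_real trmxK tr_row_mx mul_col_row A1o A2o.
  rewrite -[A1^T *m A2]trmxK trmx_mul trmxK -/C map_block_mx !map_mx1.
  rewrite mul_row_block !mulmx1 mulNmx -mulmxA -map_mxM Hv subrr.
  rewrite map_row_mx tr_row_mx mul_row_col mul0mx addr0.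
  by rewrite mulmxBl -scalemxAl mulrBl mul1r /sqnormc !mxE.
have gap_gt0 : 0 < 1 - z.
  rewrite -(pmulr_lgt0 _ v_gt0) gap lt_def sqnormc_ge0 andbT.
  apply/eqP => /sqnormc_eq0/eqP; rewrite mulmx_free_eq0 ?row_mx_eq0 ?(negPf v0) //.
  by rewrite /row_free mxrank_map mxrank_tr rkA.
have zE : z = (complex.Re z)%:C by case: z z_ge0 {Hv gap gap_gt0} => a b /ger0_Im /= ->.
split=> //; move: z_ge0 gap_gt0; rewrite zE -(rmorph1 (real_complex R)) -rmorphB.
by rewrite ler0c ltcR subr_gt0 => -> ->.
Qed.

Section GramSpectrum.
Variables (R : rcfType) (n1 n2 : nat) (C : 'M[R]_(n2, n1)).

Lemma eig_gram_neq0 z :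
  \rank C = n1 -> eigenvalue (cxmx (C^T *m C)) z -> z != 0.
Proof.
move=> rkC /eigenvalueP [v Hv v0]; apply: contraNneq v0 => z0.
move: (sqnormc_eig_gram Hv); rewrite z0 mul0r => /esym/sqnormc_eq0/eqP.
by rewrite mulmx_free_eq0 // /row_free mxrank_map mxrank_tr rkC.
Qed.

Lemma eig_gram0 : (\rank C < n1)%N -> eigenvalue (cxmx (C^T *m C)) 0.
Proof.
move=> rkC; rewrite /eigenvalue /eigenspace (raddf0 (@scalar_mx _ _)) subr0 kermx_eq0.
rewrite /row_free mxrank_map; apply: contraL rkC => /eqP rk; rewrite -leqNgt.
by have := mxrankM_maxl C^T C; rewrite mxrank_tr rk.
Qed.

Lemma eig_gramT z : z != 0 ->
  eigenvalue (cxmx (C *m C^T)) z = eigenvalue (cxmx (C^T *m C)) z.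
Proof. by move=> z0; rewrite !map_mxM eigenvalue_mulmxC. Qed.

Lemma count_mxspec_gramT_neq0 :
  \rank C = n1 -> count (predC1 0) (mxspec (C *m C^T)) = n1.
Proof.
move=> rkC; rewrite count_mxspec_mulmxC -[RHS](size_mxspec (C^T *m C)) -count_predT.
by apply: eq_in_count => z; rewrite mem_mxspec => /(eig_gram_neq0 rkC) /= ->.
Qed.

End GramSpectrum.

Section OptimalStep.
Variables (R : rcfType) (n1 n2 : nat) (C : 'M[R]_(n2, n1)).
Local Notation gram_eig mu := (eigenvalue (cxmx (C^T *m C)) mu%:C).
Local Notation gram_seq := (map (@complex.Re R) (mxspec (C *m C^T))).

Lemma gdM_factor g :
  gdM C g 1 = col_mx 1%:M (- C) *m row_mx ((1 - g)%:M) (- g *: C^T).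
Proof.
rewrite mul_col_row /gdM !mul1mx mul1r mulr1 subrr mul_mx_scalar.
rewrite scalerN -scaleNr mulNmx -scalemxAr.
by rewrite !scaleNr opprK (raddf0 (@scalar_mx _ _)) add0r.
Qed.

Lemma mem_mxspec_gdM g w : g != 0 -> 1 - g%:C + g%:C * w != 0 ->
  (1 - g%:C + g%:C * w \in mxspec (gdM C g 1)) = eigenvalue (cxmx (C^T *m C)) w.
Proof.
move=> g0 x_neq0; rewrite mem_mxspec gdM_factor map_mxM (eigenvalue_mulmxC _ _ x_neq0).
rewrite -map_mxM.
rewrite mul_row_col mulmx1 mulmxN -scalemxAl scaleNr opprK.
rewrite map_mxD map_scalar_mx map_mxZ rmorphB rmorph1 eigenvalue_affine //.
by rewrite real_complex_eq0.
Qed.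

Lemma specrad_gdM_ge g mu : 0 < g -> gram_eig mu ->
  `|1 - g + g * mu| <= specrad (gdM C g 1).
Proof.
move=> g_gt0 mu_eig; have [->|x0] := eqVneq (1 - g + g * mu) 0.
  by rewrite normr0 specrad_ge0.
rewrite -normc_real; apply: normc_le_specrad.
have xE : (1 - g + g * mu)%:C = 1 - g%:C + g%:C * mu%:C by rewrite rmorphD rmorphB rmorph1 rmorphM.
by rewrite xE mem_mxspec_gdM ?(gt_eqF g_gt0) // -xE real_complex_eq0.
Qed.

Hypothesis gram_spec : forall z, eigenvalue (cxmx (C^T *m C)) z ->
  z = (complex.Re z)%:C /\ 0 <= complex.Re z < 1.

Lemma specrad_gdM_le g b : 0 < g -> 0 <= b ->
  (forall mu, gram_eig mu -> `|1 - g + g * mu| <= b) -> specrad (gdM C g 1) <= b.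
Proof.
move=> g_gt0 b_ge0 bound; apply: specrad_le => // x.
have [-> _|x0] := eqVneq x 0; first by rewrite Normc.normc0.
have gC0 : g%:C != 0 by rewrite real_complex_eq0 gt_eqF.
set w := (x - 1 + g%:C) / g%:C.
have xE : x = 1 - g%:C + g%:C * w by rewrite /w mulrC divfK //; ring.
have xC0 : 1 - g%:C + g%:C * w != 0 by rewrite -xE.
rewrite [in X in X -> _]xE (mem_mxspec_gdM (lt0r_neq0 g_gt0) xC0) => w_eig.
have [wE _] := gram_spec w_eig.
have -> : x = (1 - g + g * complex.Re w)%:C by rewrite xE {1}wE rmorphD rmorphB rmorph1 rmorphM.
by rewrite normc_real; apply: bound; rewrite -wE; exact: w_eig.
Qed.

Lemma gdM_optimal_step lo hi : gram_eig lo -> gram_eig hi ->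
  (forall mu, gram_eig mu -> lo <= mu <= hi) ->
  let v := (hi - lo) / (2 - hi - lo) in
  let g := 2 / (2 - hi - lo) in
  (forall g1, 0 < g1 -> v <= specrad (gdM C g1 1))
  /\ 0 < g /\ specrad (gdM C g 1) = v.
Proof.
move=> lo_eig hi_eig range v g.
have [_ /andP[_ /= hi_lt1]] := gram_spec hi_eig.
have /andP[_ lo_le_hi] := range _ lo_eig.
have lower g1 : 0 < g1 -> v <= specrad (gdM C g1 1).
  move=> g1_gt0; rewrite /v; apply: (relax_rate_lb lo_le_hi hi_lt1 g1_gt0); exact: specrad_gdM_ge.
have g_gt0 : 0 < g by apply: divr_gt0; lra.
split=> //; split=> //; apply/le_anti; rewrite (lower g g_gt0) andbT.
apply: specrad_gdM_le => //; first by apply: divr_ge0; lra.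
by move=> mu /range /andP[lo_mu mu_hi]; apply: relax_rate_ub.
Qed.

Lemma gram_seq_eig x : x \in gram_seq -> 0 <= x /\ (x != 0 -> gram_eig x).
Proof.
move=> /mapP [z z_spec ->]; have [-> /=|z0] := eqVneq z 0; first by rewrite eqxx.
move: z_spec; rewrite mem_mxspec (eig_gramT _ z0) => z_eig.
have [zE /andP[z_ge0 _]] := gram_spec z_eig.
split; first exact: z_ge0.
by move=> _; rewrite -zE; exact: z_eig.
Qed.

Lemma eig_gram_seq mu : gram_eig mu -> mu != 0 -> mu \in gram_seq.
Proof.
move=> mu_eig mu0; apply/mapP; exists mu%:C => //.
rewrite mem_mxspec eig_gramT; first exact: mu_eig.
by rewrite real_complex_eq0.
Qed.

Lemma count_gram_seq_gt0 : \rank C = n1 -> count (fun x => 0 < x) gram_seq = n1.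
Proof.
move=> rkC; rewrite -[RHS](count_mxspec_gramT_neq0 rkC) count_map.
apply: eq_in_count => z; have [-> _ /=|z0] := eqVneq z 0; first by rewrite ltxx eqxx.
rewrite mem_mxspec (eig_gramT _ z0) => /gram_spec[zE /andP[z_ge0 _]] /=.
by rewrite z0 lt_def z_ge0 andbT; apply: contra z0 => /eqP Rz0; rewrite zE Rz0.
Qed.

Lemma eig_desc1_max : let l1 := eig_desc (C *m C^T) 1 in
  (l1 = 0 \/ gram_eig l1) /\ forall mu, gram_eig mu -> mu <= l1.
Proof.
move=> l1; have [l1_0|l1_neq0] := eqVneq l1 0.
  split; first by left.
  move=> mu mu_eig; have [->|mu0] := eqVneq mu 0; first by rewrite l1_0.
  exact/le_nth_sortd0/eig_gram_seq.
have l1_mem : l1 \in gram_seq.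
  by rewrite -(mem_sort (fun x y : R => y <= x)) mem_nth_neq0.
have [l1_ge0 l1_eig] := gram_seq_eig l1_mem.
split; first by right; exact: l1_eig.
move=> mu mu_eig; have [->|mu0] := eqVneq mu 0; first exact: l1_ge0.
exact/le_nth_sortd0/eig_gram_seq.
Qed.

Lemma gdM_optimal_rank_lt : (\rank C < n1)%N ->
  let l1 := eig_desc (C *m C^T) 1 in
  let v := l1 / (2 - l1) in
  let g := 2 / (2 - l1) in
  (forall g1 : R, 0 < g1 -> v <= specrad (gdM C g1 1))
  /\ 0 < g /\ specrad (gdM C g 1) = v.
Proof.
move=> rkC l1; have [l1_eig l1_max] := eig_desc1_max.
have zero_eig : gram_eig 0 by rewrite rmorph0; exact: eig_gram0.
have l1_eig' : gram_eig l1 by rewrite /l1; case: l1_eig => [->|]; [exact: zero_eig | exact].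
have range mu : gram_eig mu -> 0 <= mu <= l1.
  move=> mu_eig; have [_ /andP[/= mu_ge0 _]] := gram_spec mu_eig.
  by rewrite mu_ge0 l1_max.
by have := gdM_optimal_step zero_eig l1_eig' range; rewrite !subr0.
Qed.

Lemma gdM_optimal_rank_eq : \rank C = n1 -> (0 < n1)%N ->
  let l1 := eig_desc (C *m C^T) 1 in
  let lr := eig_desc (C *m C^T) (\rank C) in
  let v := (l1 - lr) / (2 - l1 - lr) in
  let g := 2 / (2 - l1 - lr) in
  (forall g1 : R, 0 < g1 -> v <= specrad (gdM C g1 1))
  /\ 0 < g /\ specrad (gdM C g 1) = v.
Proof.
move=> rkC n1_gt0 l1; rewrite rkC => lr; have [_ l1_max] := eig_desc1_max.
have [lr_mem lr_gt0 lr_min] : [/\ lr \in gram_seq, 0 < lr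
    & forall x, x \in gram_seq -> 0 < x -> lr <= x].
  exact: nth_sortd_count_gt0 n1_gt0 (count_gram_seq_gt0 rkC).
have lr_eig : gram_eig lr by apply: (gram_seq_eig lr_mem).2; rewrite gt_eqF.
have l1_gt0 : 0 < l1 by apply: lt_le_trans lr_gt0 (le_nth_sortd0 lr_mem).
have l1_eig : gram_eig l1.
  have [[l1_0|l1_eig] _] := eig_desc1_max; last exact: l1_eig.
  by exfalso; move: l1_gt0; rewrite /l1 l1_0 ltxx.
apply: gdM_optimal_step lr_eig l1_eig _ => mu mu_eig; rewrite (l1_max _ mu_eig) andbT.
have [_ /andP[/= mu_ge0 _]] := gram_spec mu_eig.
have mu0 := eig_gram_neq0 rkC mu_eig; rewrite real_complex_eq0 in mu0.
by apply: lr_min; [exact: eig_gram_seq | rewrite lt_def mu0].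
Qed.

End OptimalStep.

Theorem mainTheorem9 (R : rcfType) (m n1 n2 : nat)
    (A1 : 'M[R]_(m, n1)) (A2 : 'M[R]_(m, n2)) :
  \rank (row_mx A1 A2) = (n1 + n2)%N ->
  A1^T *m A1 = 1%:M ->
  A2^T *m A2 = 1%:M ->
  let C := A2^T *m A1 in
  C != 0 ->
  let r : nat := \rank C in
  let l1 := eig_desc (C *m C^T) 1 in
  let lr := eig_desc (C *m C^T) r in
  ((r < n1)%N ->
     let v := l1 / (2 - l1) in
     let g := 2 / (2 - l1) in
     (forall g1 : R, 0 < g1 -> v <= specrad (gdM C g1 1))
     /\ 0 < g /\ specrad (gdM C g 1) = v)
  /\
  (r = n1 ->
     let v := (l1 - lr) / (2 - l1 - lr) in
     let g := 2 / (2 - l1 - lr) in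
     (forall g1 : R, 0 < g1 -> v <= specrad (gdM C g1 1))
     /\ (exists2 g1 : R, 0 < g1 & specrad (gdM C g1 1) = v)
     /\ ((1 < n1)%N -> 0 < g /\ specrad (gdM C g 1) = v)).
Proof.
move=> rkA A1o A2o C C_neq0 r l1 lr.
have gram_spec := eig_cross_gram rkA A1o A2o.
split; first exact: gdM_optimal_rank_lt.
move=> rkC; have n1_gt0 : (0 < n1)%N by rewrite -rkC lt0n mxrank_eq0.
have [lower [g_gt0 opt]] := gdM_optimal_rank_eq gram_spec rkC n1_gt0.
move=> v g; split; first exact: lower.
by split; [exists g | move=> _; split].
Qed.
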